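(* Let $G$ be a quasitopological group and define groups with topology $G_\alpha$ (all with underlying group $G$) for ordinals $\alpha$ by transfinite recursion: $G_0=G$; $G_{\alpha}=c(G_{\alpha-1})$ if $\alpha$ is a successor ordinal; and, if $\alpha$ is a limit ordinal, $G_\alpha$ has topology $\bigcap_{\beta<\alpha}\mathcal T_{G_\beta}$, where $\mathcal T_{G_\beta}$ is the topology of $G_\beta$. Then each $G_\alpha$ is a quasitopological group, and there is an ordinal $\alpha$ such that $G_\alpha=\tau(G)$ (i.e. $\mathcal T_{G_\alpha}$ equals the topology of $\tau(G)$).
   Context: A quasitopological group is a group with a topology in which inversion is continuous and multiplication is separately continuous in each variable. For a quasitopological group $H$, $c(H)$ is the group $H$ with the quotient topology with respect to the multiplication map $\mu_H:H\times H\to H$. $F_M(S)$ is the free (Markov) topological group on a space $S$. For a group with topology $G$, $\tau(G)$ is $G$ with the quotient topology with respect to the multiplication epimorphism $m_G:F_M(G)\to G$ sending each generator $g$ to $g$. *)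

From Stdlib Require Import List Bool ClassicalEpsilon.
Import ListNotations.


Definition is_topology {X : Type} (O : (X -> Prop) -> Prop) : Prop :=
  O (fun _ => True) /\
  (forall U V, O U -> O V -> O (fun x => U x /\ V x)) /\
  (forall (F : (X -> Prop) -> Prop), (forall U, F U -> O U) ->
      O (fun x => exists U, F U /\ U x)).

Definition same_top {X : Type} (O1 O2 : (X -> Prop) -> Prop) : Prop :=
  forall U, O1 U <-> O2 U.

Definition prod_open {A B : Type} (OA : (A -> Prop) -> Prop) (OB : (B -> Prop) -> Prop)
  (W : A * B -> Prop) : Prop :=
  forall p, W p -> exists U V, OA U /\ OB V /\ U (fst p) /\ V (snd p) /\
      (forall a b, U a -> V b -> W (a, b)).

Definition is_group {X : Type} (mul : X -> X -> X) (inv : X -> X) (e : X) : Prop :=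
  (forall x y z, mul x (mul y z) = mul (mul x y) z) /\
  (forall x, mul e x = x) /\ (forall x, mul x e = x) /\
  (forall x, mul (inv x) x = e) /\ (forall x, mul x (inv x) = e).

Definition quasitopological {X : Type} (mul : X -> X -> X) (inv : X -> X)
  (O : (X -> Prop) -> Prop) : Prop :=
  is_topology O /\
  (forall U, O U -> O (fun x => U (inv x))) /\
  (forall a U, O U -> O (fun x => U (mul a x)) /\ O (fun x => U (mul x a))).

Definition group_topology {X : Type} (mul : X -> X -> X) (inv : X -> X)
  (O : (X -> Prop) -> Prop) : Prop :=
  is_topology O /\
  (forall U, O U -> O (fun x => U (inv x))) /\
  (forall W, O W -> prod_open O O (fun p => W (mul (fst p) (snd p)))).

(* c(H): quotient topology of H x H with respect to multiplication *)
Definition c_top {X : Type} (mul : X -> X -> X) (O : (X -> Prop) -> Prop)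
  (V : X -> Prop) : Prop :=
  prod_open O O (fun p => V (mul (fst p) (snd p))).

(* a letter (true, x) is x, (false, x) is x^{-1} *)
Definition word (X : Type) := list (bool * X).

Definition xeqb {X : Type} (x y : X) : bool :=
  if excluded_middle_informative (x = y) then true else false.

Definition cancelb {X : Type} (a b : bool * X) : bool :=
  negb (Bool.eqb (fst a) (fst b)) && xeqb (snd a) (snd b).

Fixpoint reduced {X : Type} (w : word X) : Prop :=
  match w with
  | a :: ((b :: _) as w') => cancelb a b = false /\ reduced w'
  | _ => True
  end.

Definition cons_red {X : Type} (a : bool * X) (w : word X) : word X :=
  match w with
  | b :: w' => if cancelb a b then w' else a :: w
  | [] => [a]
  end.

Definition wnorm {X : Type} (w : word X) : word X := fold_right cons_red [] w.

Lemma reduced_tail {X : Type} (a : bool * X) (w : word X) :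
  reduced (a :: w) -> reduced w.
Proof. destruct w; simpl; tauto. Qed.

Lemma cons_red_reduced {X : Type} (a : bool * X) (w : word X) :
  reduced w -> reduced (cons_red a w).
Proof.
  intros H. destruct w as [|b w']; simpl; [exact I|].
  destruct (cancelb a b) eqn:E.
  - exact (reduced_tail b w' H).
  - simpl. split; [exact E| exact H].
Qed.

Lemma wnorm_reduced {X : Type} (w : word X) : reduced (wnorm w).
Proof.
  induction w as [|a w IH]; simpl; [exact I|].
  apply cons_red_reduced; exact IH.
Qed.

Definition FG (X : Type) := { w : word X | reduced w }.

Definition fg_of {X : Type} (w : word X) : FG X := exist _ (wnorm w) (wnorm_reduced w).

Definition fg_mul {X : Type} (u v : FG X) : FG X := fg_of (proj1_sig u ++ proj1_sig v).

Definition letter_inv {X : Type} (a : bool * X) : bool * X := (negb (fst a), snd a).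

Definition fg_inv {X : Type} (u : FG X) : FG X := fg_of (rev (map letter_inv (proj1_sig u))).

Definition fg_eta {X : Type} (x : X) : FG X := fg_of [(true, x)].

(* F_M(S): the Markov free topological group topology on F(X), i.e. the
   finest group topology on F(X) for which fg_eta : S -> F(X) is continuous
   (the topology generated by all such group topologies). *)
Definition FM_open {X : Type} (OS : (X -> Prop) -> Prop) (W : FG X -> Prop) : Prop :=
  forall O : (FG X -> Prop) -> Prop,
    is_topology O ->
    (forall O' : (FG X -> Prop) -> Prop,
        group_topology (@fg_mul X) (@fg_inv X) O' ->
        (forall V, O' V -> OS (fun x : X => V (fg_eta x))) ->
        forall V, O' V -> O V) ->
    O W.

Definition meval {X : Type} (mul : X -> X -> X) (inv : X -> X) (e : X) (w : word X) : X :=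
  fold_right (fun (a : bool * X) (acc : X) => mul (if fst a then snd a else inv (snd a)) acc) e w.

(* tau(G): quotient topology of F_M(G) with respect to m_G *)
Definition tau_open {X : Type} (mul : X -> X -> X) (inv : X -> X) (e : X)
  (O : (X -> Prop) -> Prop) (V : X -> Prop) : Prop :=
  FM_open O (fun u : FG X => V (meval mul inv e (proj1_sig u))).

(* (I, lt) is a (strict) well-order; it stands for an ordinal. *)
Definition well_order {I : Type} (lt : I -> I -> Prop) : Prop :=
  well_founded lt /\
  (forall a b c, lt a b -> lt b c -> lt a c) /\
  (forall a b, lt a b \/ a = b \/ lt b a).

(* S : I -> topology on X satisfies the recursion
   G_0 = G, G_(b+1) = c(G_b), G_a = bigcap_(b<a) G_b for limit a *)
Definition transfinite_seq {X I : Type} (mul : X -> X -> X) (O : (X -> Prop) -> Prop)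
  (lt : I -> I -> Prop) (S : I -> (X -> Prop) -> Prop) : Prop :=
  (forall a, (forall b, ~ lt b a) -> same_top (S a) O) /\
  (forall a b, lt b a -> (forall c, ~ (lt b c /\ lt c a)) ->
      same_top (S a) (c_top mul (S b))) /\
  (forall a, (exists b, lt b a) -> (forall b, lt b a -> exists c, lt b c /\ lt c a) ->
      same_top (S a) (fun U => forall b, lt b a -> S b U)).

(* Each c(H) is a quasitopological group topology coarser than H, and intersections of
   quasitopological topologies are quasitopological, so every G_alpha is quasitopological and
   the sequence decreases.  Realise the ordinals by the tower: the least family of topologies
   containing G and closed under c and nonempty intersections, which is well ordered by
   reverse inclusion (Bourbaki–Witt); it satisfies the recursion.  tau(G) is coarser than
   every stage: it is coarser than G, and tau(G) ⊆ H implies tau(G) ⊆ c(H) because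
   m_G : F_M(G) -> G is open and multiplication of F_M(G) is continuous.  The coarsest stage
   is fixed by c, so its multiplication is jointly continuous; being a group topology coarser
   than G, it is coarser than tau(G), hence equal to it. *)

From Stdlib Require Import List Bool Classical FunctionalExtensionality PropExtensionality
  ProofIrrelevance ClassicalEpsilon.
Import ListNotations.

Section Topologies.
Context {X : Type}.
Implicit Types (O : (X -> Prop) -> Prop) (U V A : X -> Prop).

Lemma pred_ext A V : (forall x, A x <-> V x) -> A = V.
Proof.
  intros H. apply functional_extensionality; intros x.
  apply propositional_extensionality, H.
Qed.

Lemma same_top_eq O1 O2 : same_top O1 O2 -> O1 = O2.
Proof.
  intros H. apply functional_extensionality; intros U.
  apply propositional_extensionality, H.
Qed.

Lemma open_ext O U V : O U -> (forall x, U x <-> V x) -> O V.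
Proof. intros HU E. rewrite <- (pred_ext U V E). exact HU. Qed.

Lemma open_of_locally_open O : is_topology O ->
  forall A, (forall x, A x -> exists U, O U /\ U x /\ forall y, U y -> A y) -> O A.
Proof.
  intros [_ [_ Hunion]] A H.
  apply (open_ext O (fun x => exists U, (O U /\ forall y, U y -> A y) /\ U x)).
  - apply Hunion. intros U [HU _]; exact HU.
  - intros x; split.
    + intros [U [[_ HUA] Ux]]; auto.
    + intros Ax. destruct (H x Ax) as [U [OU [Ux HUA]]]. exists U; auto.
Qed.

Definition finer O1 O2 : Prop := forall U, O2 U -> O1 U.

Lemma finer_refl O : finer O O.
Proof. intros U H; exact H. Qed.

Lemma finer_trans O1 O2 O3 : finer O1 O2 -> finer O2 O3 -> finer O1 O3.
Proof. intros H12 H23 U H; auto. Qed.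

Lemma finer_antisym O1 O2 : finer O1 O2 -> finer O2 O1 -> O1 = O2.
Proof. intros H12 H21. apply same_top_eq. intros U; split; auto. Qed.

Definition meet (F : ((X -> Prop) -> Prop) -> Prop) : (X -> Prop) -> Prop :=
  fun U => forall O, F O -> O U.

Lemma finer_meet F O : F O -> finer O (meet F).
Proof. intros FO U HU. apply HU, FO. Qed.

Lemma meet_finer F O : (forall O', F O' -> finer O' O) -> finer (meet F) O.
Proof. intros H U HU O' FO'. apply (H O' FO'), HU. Qed.

Lemma meet_topology F : (forall O, F O -> is_topology O) -> is_topology (meet F).
Proof.
  intros HF. split; [|split].
  - intros O FO. destruct (HF O FO) as (Hfull & _); exact Hfull.
  - intros U V HU HV O FO. destruct (HF O FO) as (_ & Hinter & _).
    apply Hinter; [apply HU|apply HV]; exact FO.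
  - intros G HG O FO. destruct (HF O FO) as (_ & _ & Hunion).
    apply Hunion. intros U GU. apply (HG U GU O FO).
Qed.

Lemma meet_indexed {I : Type} (P : I -> Prop) (S : I -> (X -> Prop) -> Prop) :
  (fun U => forall i, P i -> S i U) = meet (fun O => exists i, P i /\ O = S i).
Proof.
  apply same_top_eq. intros U; split.
  - intros H O [i [Hi ->]]. apply H, Hi.
  - intros H i Hi. apply H. exists i; auto.
Qed.

Lemma coinduced_topology {Y : Type} (f : X -> Y) O :
  is_topology O -> is_topology (fun W : Y -> Prop => O (fun x => W (f x))).
Proof.
  intros (Hfull & Hinter & Hunion). split; [exact Hfull|split; [auto|]].
  intros F HF.
  apply (open_ext O (fun x => exists U, (exists W, F W /\ U = fun y => W (f y)) /\ U x)).
  - apply Hunion. intros U [W [FW ->]]. apply HF, FW.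
  - intros x; split.
    + intros [U [[W [FW ->]] Ux]]. exists W; auto.
    + intros [W [FW Wx]]. exists (fun y => W (f y)). split; [exists W|]; auto.
Qed.

End Topologies.

Lemma prod_open_mono {A B : Type} (O1 O2 : (A -> Prop) -> Prop) (P1 P2 : (B -> Prop) -> Prop) W :
  finer O2 O1 -> finer P2 P1 -> prod_open O1 P1 W -> prod_open O2 P2 W.
Proof.
  intros H1 H2 H p Wp. destruct (H p Wp) as (U & V & HU & HV & Rest).
  exists U, V; auto.
Qed.

Lemma min_succ_or_limit {I : Type} (lt : I -> I -> Prop) (a : I) :
  (forall b, ~ lt b a) \/
  (exists b, lt b a /\ forall c, ~ (lt b c /\ lt c a)) \/
  ((exists b, lt b a) /\ forall b, lt b a -> exists c, lt b c /\ lt c a).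
Proof.
  destruct (classic (exists b, lt b a)) as [Hex|Hno].
  - right. destruct (classic (exists b, lt b a /\ forall c, ~ (lt b c /\ lt c a))) as [Hs|Hs].
    + left; exact Hs.
    + right. split; [exact Hex|]. intros b Hb. apply NNPP. intros Hn.
      apply Hs. exists b. split; [exact Hb|]. intros c Hc. apply Hn. exists c; exact Hc.
  - left. intros b Hb. apply Hno. exists b; exact Hb.
Qed.

Section Groups.
Context {X : Type} (mul : X -> X -> X) (inv : X -> X) (e : X).
Hypothesis Hgrp : is_group mul inv e.

Lemma inv_mul x y : inv (mul x y) = mul (inv y) (inv x).
Proof.
  destruct Hgrp as (Hassoc & Hl & Hr & Hinvl & Hinvr).
  assert (H : mul (mul x y) (mul (inv y) (inv x)) = e).
  { rewrite <- Hassoc, (Hassoc y), Hinvr, Hl. apply Hinvr. }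
  transitivity (mul (inv (mul x y)) (mul (mul x y) (mul (inv y) (inv x)))).
  - rewrite H, Hr; reflexivity.
  - rewrite Hassoc, Hinvl, Hl; reflexivity.
Qed.

Lemma inv_inv x : inv (inv x) = x.
Proof.
  destruct Hgrp as (Hassoc & Hl & Hr & Hinvl & Hinvr).
  transitivity (mul (inv (inv x)) (mul (inv x) x)).
  - rewrite Hinvl, Hr; reflexivity.
  - rewrite Hassoc, Hinvl, Hl; reflexivity.
Qed.

End Groups.

Section MultiplicationQuotient.
Context {X : Type} (mul : X -> X -> X).

Lemma c_top_topology O : is_topology O -> is_topology (c_top mul O).
Proof.
  intros (Hfull & Hinter & Hunion). unfold c_top. split; [|split].
  - intros p _. exists (fun _ => True), (fun _ => True); auto.
  - intros U V HU HV p [Up Vp].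
    destruct (HU p Up) as (U1 & V1 & HU1 & HV1 & U1p & V1p & H1).
    destruct (HV p Vp) as (U2 & V2 & HU2 & HV2 & U2p & V2p & H2).
    exists (fun x => U1 x /\ U2 x), (fun x => V1 x /\ V2 x).
    do 4 (split; [auto|]). intros a b [] []; split; auto.
  - intros F HF p [U [FU Up]].
    destruct (HF U FU p Up) as (U1 & V1 & HU1 & HV1 & U1p & V1p & H1).
    exists U1, V1. do 4 (split; [auto|]). intros a b Ha Hb. exists U; auto.
Qed.

Lemma c_top_mono O1 O2 : finer O1 O2 -> finer (c_top mul O1) (c_top mul O2).
Proof. intros H U. apply prod_open_mono; exact H. Qed.

Variables (inv : X -> X) (e : X).
Hypothesis Hgrp : is_group mul inv e.

(* Test the product-open preimage of U at the pair (x, e). *)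
Lemma c_top_coarser O : is_topology O -> finer O (c_top mul O).
Proof.
  intros HO U HU. destruct Hgrp as (_ & _ & Hr & _).
  apply open_of_locally_open; [exact HO|]. intros x Ux.
  destruct (HU (x, e)) as (U1 & V1 & HU1 & _ & U1x & V1e & H1).
  { simpl. rewrite Hr; exact Ux. }
  exists U1. split; [exact HU1|split; [exact U1x|]].
  intros y U1y. rewrite <- (Hr y). exact (H1 y e U1y V1e).
Qed.

Lemma c_top_quasi O : quasitopological mul inv O -> quasitopological mul inv (c_top mul O).
Proof.
  intros (HO & Hinv & Htransl). pose proof Hgrp as (Hassoc & _).
  split; [apply c_top_topology, HO|split].
  - intros V HV [x y] Vxy. simpl in Vxy. rewrite (inv_mul mul inv e Hgrp) in Vxy.
    destruct (HV (inv y, inv x) Vxy) as (U1 & V1 & HU1 & HV1 & U1y & V1x & H1).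
    exists (fun x => V1 (inv x)), (fun y => U1 (inv y)). simpl.
    do 4 (split; [auto|]). intros a b Ha Hb. simpl.
    rewrite (inv_mul mul inv e Hgrp). apply H1; auto.
  - intros a V HV. split.
    + intros [x y] Vxy. simpl in Vxy. rewrite Hassoc in Vxy.
      destruct (HV (mul a x, y) Vxy) as (U1 & V1 & HU1 & HV1 & U1ax & V1y & H1).
      exists (fun x => U1 (mul a x)), V1. simpl.
      split; [apply Htransl, HU1|do 3 (split; [auto|])].
      intros u v Hu Hv. simpl. rewrite Hassoc. apply H1; auto.
    + intros [x y] Vxy. simpl in Vxy. rewrite <- Hassoc in Vxy.
      destruct (HV (x, mul y a) Vxy) as (U1 & V1 & HU1 & HV1 & U1x & V1ya & H1).
      exists U1, (fun y => V1 (mul y a)). simpl.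
      split; [auto|split; [apply Htransl, HV1|do 2 (split; [auto|])]].
      intros u v Hu Hv. simpl. rewrite <- Hassoc. apply H1; auto.
Qed.

End MultiplicationQuotient.

Lemma meet_quasi {X : Type} (mul : X -> X -> X) (inv : X -> X)
  (F : ((X -> Prop) -> Prop) -> Prop) :
  (forall O, F O -> quasitopological mul inv O) -> quasitopological mul inv (meet F).
Proof.
  intros HF. split; [|split].
  - apply meet_topology. intros O FO. apply (HF O FO).
  - intros U HU O FO. destruct (HF O FO) as (_ & Hinv & _). apply Hinv, HU, FO.
  - intros a U HU. split; intros O FO; destruct (HF O FO) as (_ & _ & Htransl);
      apply Htransl, HU, FO.
Qed.

Lemma transfinite_seq_quasi {X : Type} (mul : X -> X -> X) (inv : X -> X) (e : X)
  (O : (X -> Prop) -> Prop) :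
  is_group mul inv e -> quasitopological mul inv O ->
  forall (I : Type) (lt : I -> I -> Prop) (S : I -> (X -> Prop) -> Prop),
    well_order lt -> transfinite_seq mul O lt S -> forall a, quasitopological mul inv (S a).
Proof.
  intros Hgrp Hq I lt S [Hwf _] (Hmin & Hsucc & Hlim) a.
  induction a as [a IH] using (well_founded_ind Hwf).
  destruct (min_succ_or_limit lt a) as [Ha|[[b [Hb Hbc]]|[Hex Ha]]].
  - rewrite (same_top_eq _ _ (Hmin a Ha)). exact Hq.
  - rewrite (same_top_eq _ _ (Hsucc a b Hb Hbc)). apply (c_top_quasi mul inv e Hgrp), IH, Hb.
  - rewrite (same_top_eq _ _ (Hlim a Hex Ha)), meet_indexed. apply meet_quasi.
    intros O' [b [Hb ->]]. apply IH, Hb.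
Qed.

Section FreeGroup.
Context {X : Type}.
Implicit Types (a b : bool * X) (s t w z : word X).

Lemma cancelb_letter_inv a : cancelb a (letter_inv a) = true.
Proof.
  destruct a as [[] x]; unfold cancelb, letter_inv, xeqb; simpl;
    destruct (excluded_middle_informative (x = x)); congruence.
Qed.

Lemma cancelb_eq a b : cancelb a b = true -> b = letter_inv a.
Proof.
  destruct a as [b1 x1], b as [b2 x2]. unfold cancelb, letter_inv, xeqb; simpl.
  destruct (excluded_middle_informative (x1 = x2)) as [->|];
    [|rewrite andb_false_r; discriminate].
  destruct b1, b2; simpl; congruence.
Qed.

Lemma letter_inv_inv a : letter_inv (letter_inv a) = a.
Proof. destruct a as [b x]; unfold letter_inv; simpl; rewrite negb_involutive; reflexivity. Qed.

Lemma cons_red_cancel a w : reduced w -> cons_red a (cons_red (letter_inv a) w) = w.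
Proof.
  intros Hw. destruct w as [|b w']; simpl; [rewrite cancelb_letter_inv; reflexivity|].
  destruct (cancelb (letter_inv a) b) eqn:E; simpl; [|rewrite cancelb_letter_inv; reflexivity].
  apply cancelb_eq in E. rewrite letter_inv_inv in E. subst b.
  destruct w' as [|c w'']; [reflexivity|].
  simpl in Hw. destruct Hw as [Hc _]. simpl. rewrite Hc. reflexivity.
Qed.

(* Left multiplication of a reduced word by a word; [wnorm s] is [act s []]. *)
Definition act s z : word X := fold_right cons_red z s.

Lemma act_reduced s z : reduced z -> reduced (act s z).
Proof. intros Hz; induction s; simpl; auto. apply cons_red_reduced; auto. Qed.

Lemma act_app s t z : act (s ++ t) z = act s (act t z).
Proof. apply fold_right_app. Qed.

Lemma wnorm_app s t : wnorm (s ++ t) = act s (wnorm t).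
Proof. apply fold_right_app. Qed.

Lemma wnorm_id w : reduced w -> wnorm w = w.
Proof.
  induction w as [|a w IH]; intros H; [reflexivity|].
  simpl. rewrite (IH (reduced_tail a w H)).
  destruct w as [|b w']; [reflexivity|]. simpl. simpl in H. destruct H as [H _].
  rewrite H. reflexivity.
Qed.

Lemma act_cons_red a w z : reduced z -> act (cons_red a w) z = cons_red a (act w z).
Proof.
  intros Hz. destruct w as [|b w']; [reflexivity|].
  simpl. destruct (cancelb a b) eqn:E; [|reflexivity].
  apply cancelb_eq in E. subst b. rewrite cons_red_cancel; [reflexivity|].
  apply act_reduced, Hz.
Qed.

Lemma act_wnorm s z : reduced z -> act (wnorm s) z = act s z.
Proof.
  intros Hz. induction s as [|a s IH]; [reflexivity|].
  simpl. rewrite act_cons_red, IH; auto.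
Qed.

Definition winv s : word X := rev (map letter_inv s).

Lemma winv_cons a s : winv (a :: s) = winv s ++ [letter_inv a].
Proof. reflexivity. Qed.

Lemma act_winv s z : reduced z -> act (s ++ winv s) z = z.
Proof.
  revert z. induction s as [|a s IH]; intros z Hz; [reflexivity|].
  rewrite winv_cons, app_assoc, act_app. simpl.
  rewrite IH by (apply cons_red_reduced, Hz).
  apply cons_red_cancel, Hz.
Qed.

Lemma fg_eq (u v : FG X) : proj1_sig u = proj1_sig v -> u = v.
Proof.
  destruct u as [u Hu], v as [v Hv]; simpl; intros ->. f_equal; apply proof_irrelevance.
Qed.

Lemma fg_mulKVg (w a : FG X) : fg_mul w (fg_mul (fg_inv w) a) = a.
Proof.
  apply fg_eq. destruct w as [w Hw], a as [a Ha]. simpl. fold (winv w).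
  rewrite wnorm_app, (wnorm_id (wnorm _)) by apply wnorm_reduced.
  rewrite wnorm_app, (wnorm_id a Ha), act_wnorm, <- act_app by exact Ha.
  apply act_winv, Ha.
Qed.

End FreeGroup.

Section Evaluation.
Context {X : Type} (mul : X -> X -> X) (inv : X -> X) (e : X).
Hypothesis Hgrp : is_group mul inv e.
Local Notation meval := (meval mul inv e).

Definition letter_val (a : bool * X) : X := if fst a then snd a else inv (snd a).

Lemma meval_app s t : meval (s ++ t) = mul (meval s) (meval t).
Proof.
  destruct Hgrp as (Hassoc & Hl & _).
  induction s as [|a s IH]; simpl; [rewrite Hl|rewrite IH, Hassoc]; reflexivity.
Qed.

Lemma meval_cons_red a w : meval (cons_red a w) = mul (letter_val a) (meval w).
Proof.
  destruct Hgrp as (Hassoc & Hl & _ & Hinvl & Hinvr).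
  destruct w as [|b w']; [reflexivity|].
  simpl. destruct (cancelb a b) eqn:E; [|reflexivity].
  apply cancelb_eq in E. subst b. simpl. rewrite Hassoc.
  destruct a as [[] x]; unfold letter_inv, letter_val; simpl;
    [rewrite Hinvr|rewrite Hinvl]; rewrite Hl; reflexivity.
Qed.

Lemma meval_act s z : meval (act s z) = mul (meval s) (meval z).
Proof.
  destruct Hgrp as (Hassoc & Hl & _).
  induction s as [|a s IH]; simpl; [rewrite Hl; reflexivity|].
  rewrite meval_cons_red, IH, Hassoc. reflexivity.
Qed.

Lemma meval_wnorm s : meval (wnorm s) = meval s.
Proof.
  destruct Hgrp as (_ & _ & Hr & _).
  change (wnorm s) with (act s []). rewrite meval_act. apply Hr.
Qed.

Lemma meval_winv s : meval (winv s) = inv (meval s).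
Proof.
  destruct Hgrp as (Hassoc & Hl & Hr & Hinvl & Hinvr).
  induction s as [|a s IH].
  - simpl. rewrite <- (Hinvl e) at 1. rewrite Hr. reflexivity.
  - rewrite winv_cons, meval_app, IH. simpl.
    rewrite (inv_mul mul inv e Hgrp), Hr. f_equal.
    destruct a as [[] x]; simpl; [reflexivity|]. symmetry; apply (inv_inv mul inv e Hgrp).
Qed.

Definition fg_eval (u : FG X) : X := meval (proj1_sig u).

Lemma fg_eval_mul u v : fg_eval (fg_mul u v) = mul (fg_eval u) (fg_eval v).
Proof. unfold fg_eval, fg_mul, fg_of; simpl. rewrite meval_wnorm. apply meval_app. Qed.

Lemma fg_eval_inv u : fg_eval (fg_inv u) = inv (fg_eval u).
Proof. unfold fg_eval, fg_inv, fg_of; simpl. rewrite meval_wnorm. apply meval_winv. Qed.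

Lemma fg_eval_eta x : fg_eval (fg_eta x) = x.
Proof. destruct Hgrp as (_ & _ & Hr & _). apply Hr. Qed.

End Evaluation.

Section Pullback.
Context {A B : Type} (f : A -> B) (T : (B -> Prop) -> Prop).

Definition pullback : (A -> Prop) -> Prop :=
  fun W => exists V, T V /\ forall u, W u <-> V (f u).

Lemma pullback_topology : is_topology T -> is_topology pullback.
Proof.
  intros (Hfull & Hinter & Hunion). split; [|split].
  - exists (fun _ => True). split; [exact Hfull|tauto].
  - intros U W [U' [HU' EU]] [W' [HW' EW]].
    exists (fun x => U' x /\ W' x). split; [auto|]. intros u. rewrite EU, EW. tauto.
  - intros F HF.
    exists (fun y => exists V, (T V /\ exists W, F W /\ forall u, W u <-> V (f u)) /\ V y).
    split; [apply Hunion; intros V [HV _]; exact HV|].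
    intros u; split.
    + intros [W [FW Wu]]. destruct (HF W FW) as [V [HV E]].
      exists V. split; [split; [exact HV|exists W; auto]|apply E, Wu].
    + intros [V [[_ [W [FW E]]] Vu]]. exists W. split; [exact FW|apply E, Vu].
Qed.

Lemma pullback_group_topology (mulA : A -> A -> A) (invA : A -> A)
  (mulB : B -> B -> B) (invB : B -> B) :
  (forall u v, f (mulA u v) = mulB (f u) (f v)) -> (forall u, f (invA u) = invB (f u)) ->
  group_topology mulB invB T -> group_topology mulA invA pullback.
Proof.
  intros Hmul Hinv (HT & Tinv & Tmul). split; [apply pullback_topology, HT|split].
  - intros W [V [HV E]]. exists (fun y => V (invB y)).
    split; [apply Tinv, HV|]. intros u. rewrite E, Hinv. tauto.
  - intros W [V [HV E]] [u v] Wuv. simpl in Wuv. rewrite E, Hmul in Wuv.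
    destruct (Tmul V HV (f u, f v) Wuv) as (U1 & V1 & HU1 & HV1 & U1u & V1v & H1).
    exists (fun a => U1 (f a)), (fun b => V1 (f b)).
    split; [exists U1; split; [exact HU1|tauto]|].
    split; [exists V1; split; [exact HV1|tauto]|].
    split; [exact U1u|split; [exact V1v|]].
    intros a b Ha Hb. simpl. apply E. rewrite Hmul. apply H1; auto.
Qed.

End Pullback.

Section FreeTopologicalGroup.
Context {X : Type} (OS : (X -> Prop) -> Prop).

Lemma FM_topology : is_topology (FM_open OS).
Proof.
  split; [|split].
  - intros O HO _. apply HO.
  - intros U V HU HV O HO H. pose proof HO as (_ & Hinter & _).
    apply Hinter; [apply HU|apply HV]; auto.
  - intros F HF O HO H. pose proof HO as (_ & _ & Hunion).
    apply Hunion. intros U FU. apply HF; auto.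
Qed.

Lemma FM_open_of_group_topology (O : (FG X -> Prop) -> Prop) :
  group_topology (@fg_mul X) (@fg_inv X) O ->
  (forall V, O V -> OS (fun x => V (fg_eta x))) -> finer (FM_open OS) O.
Proof. intros HO Heta V HV O' _ H. apply (H O HO Heta V HV). Qed.

Lemma FM_open_eta W : is_topology OS -> FM_open OS W -> OS (fun x => W (fg_eta x)).
Proof.
  intros HOS HW. apply (HW _ (coinduced_topology fg_eta OS HOS)).
  intros O _ Heta. exact Heta.
Qed.

(* F_M(X) ∩ c(F_M(X)) is a topology containing every group topology making [fg_eta]
   continuous, hence it contains F_M(X). *)
Lemma FM_mul_continuous : finer (c_top (@fg_mul X) (FM_open OS)) (FM_open OS).
Proof.
  intros W HW.
  set (F := fun O => O = FM_open OS \/ O = c_top (@fg_mul X) (FM_open OS)).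
  assert (HF : is_topology (meet F)).
  { apply meet_topology. intros O [->| ->]; [|apply c_top_topology]; apply FM_topology. }
  enough (Hmeet : meet F W) by (apply Hmeet; right; reflexivity).
  apply (HW _ HF). intros O Hgt Heta V HV.
  pose proof (FM_open_of_group_topology O Hgt Heta) as HFM.
  intros O' [->| ->]; [apply HFM, HV|].
  apply (c_top_mono _ _ _ HFM). destruct Hgt as (_ & _ & Hmul). apply Hmul, HV.
Qed.

Lemma FM_open_mulr W g : FM_open OS W -> FM_open OS (fun u => W (fg_mul u g)).
Proof.
  intros HW. apply open_of_locally_open; [apply FM_topology|]. intros x Wxg.
  destruct (FM_mul_continuous W HW (x, g) Wxg) as (U & V & HU & _ & Ux & Vg & H).
  exists U. split; [exact HU|split; [exact Ux|]]. intros y Uy. apply (H y g Uy Vg).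
Qed.

Variables (mul : X -> X -> X) (inv : X -> X) (e : X).
Hypothesis Hgrp : is_group mul inv e.
Local Notation fg_eval := (fg_eval mul inv e).

(* m_G is an open map: the saturation of an open set A is the union of the right
   translates of A by the kernel elements w^-1 a. *)
Lemma FM_open_saturation A :
  FM_open OS A -> FM_open OS (fun w => exists a, A a /\ fg_eval w = fg_eval a).
Proof.
  intros HA. destruct Hgrp as (_ & _ & Hr & Hinvl & _).
  apply open_of_locally_open; [apply FM_topology|]. intros w [a [Aa Ew]].
  set (g := fg_mul (fg_inv w) a).
  exists (fun u => A (fg_mul u g)). split; [apply FM_open_mulr, HA|split].
  - unfold g. rewrite fg_mulKVg. exact Aa.
  - intros u Aug. exists (fg_mul u g). split; [exact Aug|].
    unfold g. rewrite !(fg_eval_mul _ _ _ Hgrp), (fg_eval_inv _ _ _ Hgrp), <- Ew, Hinvl, Hr.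
    reflexivity.
Qed.

End FreeTopologicalGroup.

Section Tau.
Context {X : Type} (mul : X -> X -> X) (inv : X -> X) (e : X) (O : (X -> Prop) -> Prop).
Hypothesis Hgrp : is_group mul inv e.
Local Notation fg_eval := (fg_eval mul inv e).
Local Notation tau := (tau_open mul inv e O).

Lemma tau_coarser : is_topology O -> finer O tau.
Proof.
  intros HO V HV. apply (open_ext O _ _ (FM_open_eta O _ HO HV)).
  intros x. change (V (fg_eval (fg_eta x)) <-> V x). rewrite (fg_eval_eta _ _ _ Hgrp). tauto.
Qed.

(* The images under the open map m_G of product-open neighbourhoods in F_M(X) are
   product-open for H. *)
Lemma tau_coarser_c_top (H : (X -> Prop) -> Prop) : finer H tau -> finer (c_top mul H) tau.
Proof.
  intros Htau V HV [x y] Vxy. simpl in Vxy.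
  destruct (FM_mul_continuous O _ HV (fg_eta x, fg_eta y)) as (A & B & HA & HB & Ax & By & HAB).
  { change (V (fg_eval (fg_mul (fg_eta x) (fg_eta y)))).
    rewrite (fg_eval_mul _ _ _ Hgrp), !(fg_eval_eta _ _ _ Hgrp). exact Vxy. }
  exists (fun z => exists a, A a /\ z = fg_eval a), (fun z => exists b, B b /\ z = fg_eval b).
  split; [|split; [|split; [|split]]].
  - apply Htau. apply (open_ext _ _ _ (FM_open_saturation O mul inv e Hgrp A HA)).
    intros u. split; intros [a [Aa E]]; exists a; auto.
  - apply Htau. apply (open_ext _ _ _ (FM_open_saturation O mul inv e Hgrp B HB)).
    intros u. split; intros [b [Bb E]]; exists b; auto.
  - exists (fg_eta x). rewrite (fg_eval_eta _ _ _ Hgrp). auto.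
  - exists (fg_eta y). rewrite (fg_eval_eta _ _ _ Hgrp). auto.
  - intros x' y' [a [Aa ->]] [b [Bb ->]]. simpl. rewrite <- (fg_eval_mul _ _ _ Hgrp).
    apply (HAB a b Aa Bb).
Qed.

Lemma group_topology_coarser_tau (T : (X -> Prop) -> Prop) :
  group_topology mul inv T -> finer O T -> finer tau T.
Proof.
  intros HT HOT V HV OF HOF HFM.
  apply (HFM (pullback fg_eval T)).
  - apply (pullback_group_topology _ _ _ _ mul inv); auto using fg_eval_mul, fg_eval_inv.
  - intros W [V' [HV' E]]. apply (open_ext O V'); [apply HOT, HV'|].
    intros x. rewrite E, (fg_eval_eta _ _ _ Hgrp). tauto.
  - exists V. split; [exact HV|tauto].
Qed.

End Tau.

Section Tower.
Context {X : Type} (base : (X -> Prop) -> Prop)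
  (f : ((X -> Prop) -> Prop) -> (X -> Prop) -> Prop).

Inductive tower : ((X -> Prop) -> Prop) -> Prop :=
| tower_base : tower base
| tower_step t : tower t -> tower (f t)
| tower_meet F : (forall t, F t -> tower t) -> (exists t, F t) -> tower (meet F).

Hypothesis f_mono : forall t s, finer t s -> finer (f t) (f s).
Hypothesis f_coarser : forall t, tower t -> finer t (f t).

Lemma tower_finer_ind g : finer base g -> (forall t, finer t g -> finer (f t) g) ->
  forall t, tower t -> finer t g.
Proof.
  intros Hbase Hstep t Ht. induction Ht as [|t Ht IH|F HF IH Hne].
  - exact Hbase.
  - apply Hstep, IH.
  - apply meet_finer, IH.
Qed.

Lemma base_finer_tower t : tower t -> finer base t.
Proof.
  intros Ht. induction Ht as [|t Ht IH|F HF IH [t Ft]].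
  - apply finer_refl.
  - apply (finer_trans _ _ _ IH), f_coarser, Ht.
  - apply (finer_trans _ _ _ (IH t Ft)), finer_meet, Ft.
Qed.

(* Bourbaki–Witt: c is extreme when no tower element strictly finer than c jumps past c. *)
Definition extreme c : Prop :=
  forall s, tower s -> finer s c -> s <> c -> finer (f s) c.

Lemma extreme_split c : tower c -> extreme c ->
  forall s, tower s -> finer s c \/ finer (f c) s.
Proof.
  intros Hc Ec s Hs. induction Hs as [|h Hh IH|F HF IH Hne].
  - left. apply base_finer_tower, Hc.
  - destruct IH as [IH|IH].
    + destruct (classic (h = c)) as [->|Hn]; [right; apply finer_refl|left; apply Ec; auto].
    + right. apply (finer_trans _ _ _ IH), f_coarser, Hh.
  - destruct (classic (forall h, F h -> finer h c)) as [Hall|Hn].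
    + left. apply meet_finer, Hall.
    + apply not_all_ex_not in Hn. destruct Hn as [h Hn].
      apply imply_to_and in Hn. destruct Hn as [Fh Hn].
      destruct (IH h Fh) as [H|H]; [contradiction|].
      right. apply (finer_trans _ _ _ H), finer_meet, Fh.
Qed.

Lemma tower_extreme c : tower c -> extreme c.
Proof.
  intros Hc. induction Hc as [|c Hc IH|F HF IH Hne]; intros s Hs Hsc Hn.
  - exfalso. apply Hn, finer_antisym; [exact Hsc|apply base_finer_tower, Hs].
  - destruct (extreme_split c Hc IH s Hs) as [H|H].
    + destruct (classic (s = c)) as [->|Hn']; [apply finer_refl|].
      apply (finer_trans _ _ _ (IH s Hs H Hn')), f_coarser, Hc.
    + exfalso. apply Hn, finer_antisym; auto.
  - destruct (classic (forall h, F h -> finer h s)) as [Hall|Hno].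
    + exfalso. apply Hn, finer_antisym; [exact Hsc|apply meet_finer, Hall].
    + apply not_all_ex_not in Hno. destruct Hno as [h Hno].
      apply imply_to_and in Hno. destruct Hno as [Fh Hhs].
      destruct (extreme_split h (HF h Fh) (IH h Fh) s Hs) as [H|H].
      * assert (Hsh : s <> h) by (intros ->; apply Hhs, finer_refl).
        apply (finer_trans _ _ _ (IH h Fh s Hs H Hsh)), finer_meet, Fh.
      * exfalso. apply Hhs, (finer_trans _ _ _ (f_coarser h (HF h Fh))), H.
Qed.

Lemma tower_split c s : tower c -> tower s -> finer s c \/ finer (f c) s.
Proof. intros Hc. apply (extreme_split c Hc), tower_extreme, Hc. Qed.

Lemma tower_total c s : tower c -> tower s -> finer s c \/ finer c s.
Proof.
  intros Hc Hs. destruct (tower_split c s Hc Hs) as [H|H]; [left; exact H|right].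
  apply (finer_trans _ _ _ (f_coarser c Hc)), H.
Qed.

Lemma tower_finer_fixpoint b : tower b -> f b = b -> forall t, tower t -> finer t b.
Proof.
  intros Hb Hfix. apply tower_finer_ind; [apply base_finer_tower, Hb|].
  intros t Ht. rewrite <- Hfix. apply f_mono, Ht.
Qed.

Lemma tower_finer_step h s : tower h -> tower s ->
  finer s (f h) -> s <> f h -> finer s h.
Proof.
  intros Hh Hs Hsfh Hn. destruct (tower_split h s Hh Hs) as [H|H]; [exact H|].
  exfalso. apply Hn, finer_antisym; assumption.
Qed.

Lemma tower_finer_meet F s : (forall t, F t -> tower t) -> tower s ->
  finer s (meet F) -> s <> meet F -> exists h, F h /\ finer s h.
Proof.
  intros HF Hs Hsm Hn.
  destruct (classic (forall h, F h -> finer h s)) as [Hall|Hno].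
  - exfalso. apply Hn, finer_antisym; [exact Hsm|apply meet_finer, Hall].
  - apply not_all_ex_not in Hno. destruct Hno as [h Hno].
    apply imply_to_and in Hno. destruct Hno as [Fh Hhs].
    exists h. split; [exact Fh|].
    destruct (tower_total h s (HF h Fh) Hs) as [H|H]; [exact H|contradiction].
Qed.

Definition stage : Type := { t | tower t }.

(* Stages are ordered from the finest (the base) to the coarsest. *)
Definition stage_lt (x y : stage) : Prop :=
  finer (proj1_sig x) (proj1_sig y) /\ proj1_sig x <> proj1_sig y.

Lemma stage_eq (x y : stage) : proj1_sig x = proj1_sig y -> x = y.
Proof. destruct x, y; simpl; intros ->; f_equal; apply proof_irrelevance. Qed.

(* Induction on the tower: every stage finer than t is accessible. *)
Lemma stage_lt_wf : well_founded stage_lt.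
Proof.
  assert (Hacc : forall t, tower t ->
    forall s (Hs : tower s), finer s t -> Acc stage_lt (exist _ s Hs)).
  { intros t Ht. induction Ht as [|h Hh IH|F HF IH Hne]; intros s Hs Hst.
    - assert (Es : s = base) by (apply finer_antisym; [exact Hst|apply base_finer_tower, Hs]).
      subst s. constructor. intros [y Hy] [Hys Hn]; simpl in *. exfalso.
      apply Hn, finer_antisym; [exact Hys|apply base_finer_tower, Hy].
    - destruct (classic (s = f h)) as [->|Hn].
      + constructor. intros [y Hy] [Hys Hn]; simpl in *.
        apply IH, (tower_finer_step h y Hh Hy Hys Hn).
      + apply IH, (tower_finer_step h s Hh Hs Hst Hn).
    - destruct (classic (s = meet F)) as [->|Hn].
      + constructor. intros [y Hy] [Hys Hn]; simpl in *.
        destruct (tower_finer_meet F y HF Hy Hys Hn) as [h [Fh Hyh]].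
        apply (IH h Fh), Hyh.
      + destruct (tower_finer_meet F s HF Hs Hst Hn) as [h [Fh Hsh]].
        apply (IH h Fh), Hsh. }
  intros [s Hs]. apply (Hacc s Hs), finer_refl.
Qed.

Lemma stage_lt_well_order : well_order stage_lt.
Proof.
  split; [exact stage_lt_wf|split].
  - intros [a Ha] [b Hb] [c Hc] [Hab Nab] [Hbc Nbc]; unfold stage_lt; simpl in *.
    split; [apply (finer_trans _ _ _ Hab Hbc)|].
    intros ->. apply Nab, finer_antisym; assumption.
  - intros [a Ha] [b Hb]. destruct (classic (a = b)) as [->|Hn].
    + right; left. apply stage_eq; reflexivity.
    + unfold stage_lt; simpl.
      destruct (tower_total b a Hb Ha) as [H|H]; [left|right; right]; split; auto.
Qed.

Lemma stage_min (a : stage) : (forall b, ~ stage_lt b a) -> proj1_sig a = base.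
Proof.
  destruct a as [a Ha]; simpl. intros Hmin. apply NNPP. intros Hn.
  apply (Hmin (exist _ base tower_base)). split; simpl.
  - apply base_finer_tower, Ha.
  - intros ->. apply Hn; reflexivity.
Qed.

Lemma stage_succ (a b : stage) : stage_lt b a ->
  (forall c, ~ (stage_lt b c /\ stage_lt c a)) -> proj1_sig a = f (proj1_sig b).
Proof.
  destruct a as [a Ha], b as [b Hb]; unfold stage_lt; simpl. intros [Hba Hn] Hbetween.
  destruct (tower_split b a Hb Ha) as [H|H].
  { exfalso. apply Hn, finer_antisym; assumption. }
  destruct (classic (f b = b)) as [Hfix|Hnfix].
  { exfalso. apply Hn, finer_antisym; [exact Hba|]. apply tower_finer_fixpoint; assumption. }
  apply NNPP. intros Hna. apply (Hbetween (exist _ (f b) (tower_step b Hb))); simpl.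
  split; split.
  - apply f_coarser, Hb.
  - intros Hbf. apply Hnfix; symmetry; exact Hbf.
  - exact H.
  - intros Hfa. apply Hna; symmetry; exact Hfa.
Qed.

Lemma stage_limit (a : stage) : (exists b, stage_lt b a) ->
  (forall b, stage_lt b a -> exists c, stage_lt b c /\ stage_lt c a) ->
  proj1_sig a = meet (fun t => exists b, stage_lt b a /\ t = proj1_sig b).
Proof.
  intros [b0 Hb0] Hlim.
  set (F := fun t => exists b, stage_lt b a /\ t = proj1_sig b).
  assert (HmF : tower (meet F)).
  { apply tower_meet; [intros t [[b Hb] [_ ->]]; exact Hb|exists (proj1_sig b0), b0; auto]. }
  assert (HaF : finer (meet F) (proj1_sig a)).
  { apply meet_finer. intros t [b [[Hba _] ->]]. exact Hba. }
  apply NNPP. intros Hn.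
  destruct (Hlim (exist _ (meet F) HmF)) as [c [[HFc HnFc] Hca]].
  - split; [exact HaF|]. intros Heq; apply Hn; symmetry; exact Heq.
  - apply HnFc, finer_antisym; [exact HFc|]. apply finer_meet. exists c; auto.
Qed.

Definition tower_top : (X -> Prop) -> Prop := meet tower.

Lemma tower_top_tower : tower tower_top.
Proof. apply tower_meet; [auto|exists base; apply tower_base]. Qed.

Lemma tower_top_fixed : f tower_top = tower_top.
Proof.
  apply finer_antisym; [apply finer_meet, tower_step, tower_top_tower|].
  apply f_coarser, tower_top_tower.
Qed.

End Tower.

Section QuotientTower.
Context {X : Type} (mul : X -> X -> X) (inv : X -> X) (e : X) (O : (X -> Prop) -> Prop).
Hypothesis Hgrp : is_group mul inv e.
Hypothesis Hq : quasitopological mul inv O.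

Lemma c_tower_quasi t : tower O (c_top mul) t -> quasitopological mul inv t.
Proof.
  intros Ht. induction Ht as [|t Ht IH|F HF IH Hne].
  - exact Hq.
  - apply (c_top_quasi mul inv e Hgrp), IH.
  - apply meet_quasi, IH.
Qed.

Lemma c_tower_coarser t : tower O (c_top mul) t -> finer t (c_top mul t).
Proof. intros Ht. apply (c_top_coarser mul inv e Hgrp), (c_tower_quasi t Ht). Qed.

Local Notation c_stage_lt := (stage_lt O (c_top mul)).

Lemma c_stage_transfinite_seq : transfinite_seq mul O c_stage_lt (fun x => proj1_sig x).
Proof.
  split; [|split].
  - intros a Ha. rewrite (stage_min _ _ c_tower_coarser a Ha). intros U; tauto.
  - intros a b Hba Hbetween.
    rewrite (stage_succ _ _ (c_top_mono mul) c_tower_coarser a b Hba Hbetween). intros U; tauto.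
  - intros a Hex Hlim. rewrite (stage_limit _ _ a Hex Hlim), meet_indexed. intros U; tauto.
Qed.

(* The coarsest stage is a group topology, as c fixes it. *)
Lemma c_tower_top_group_topology : group_topology mul inv (tower_top O (c_top mul)).
Proof.
  destruct (c_tower_quasi _ (tower_top_tower O (c_top mul))) as (Htop & Hinv & _).
  split; [exact Htop|split; [exact Hinv|]].
  intros W HW. rewrite <- (tower_top_fixed _ _ c_tower_coarser) in HW. exact HW.
Qed.

Lemma c_tower_top_tau : tower_top O (c_top mul) = tau_open mul inv e O.
Proof.
  apply finer_antisym.
  - apply (tower_finer_ind O (c_top mul)).
    + apply (tau_coarser mul inv e O Hgrp), Hq.
    + apply (tau_coarser_c_top mul inv e O Hgrp).
    + apply tower_top_tower.
  - apply (group_topology_coarser_tau mul inv e O Hgrp _ c_tower_top_group_topology).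
    apply (base_finer_tower _ _ c_tower_coarser), tower_top_tower.
Qed.

End QuotientTower.

Theorem theorem3p8 (X : Type) (mul : X -> X -> X) (inv : X -> X) (e : X)
  (O : (X -> Prop) -> Prop)
  (Hgrp : is_group mul inv e) (Hq : quasitopological mul inv O) :
  (forall (I : Type) (lt : I -> I -> Prop) (S : I -> (X -> Prop) -> Prop),
      well_order lt -> transfinite_seq mul O lt S ->
      forall a : I, quasitopological mul inv (S a)) /\
  (exists (I : Type) (lt : I -> I -> Prop) (S : I -> (X -> Prop) -> Prop) (a : I),
      well_order lt /\ transfinite_seq mul O lt S /\
      same_top (S a) (tau_open mul inv e O)).
Proof.
  pose proof (c_tower_coarser mul inv e O Hgrp Hq) as Hcoarser.
  split; [exact (transfinite_seq_quasi mul inv e O Hgrp Hq)|].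
  exists (stage O (c_top mul)), (stage_lt O (c_top mul)), (fun x => proj1_sig x),
    (exist _ _ (tower_top_tower O (c_top mul))).
  split; [exact (stage_lt_well_order _ _ Hcoarser)|].
  split; [exact (c_stage_transfinite_seq mul inv e O Hgrp Hq)|].
  simpl. rewrite (c_tower_top_tau mul inv e O Hgrp Hq). intros U; tauto.
Qed.
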